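(* (1) For every $t\ge7$, $\mathfrak{e}^E_t\in\mathcal{E}(\mathcal{P}^{s+}_{3,5})$. (2) If $t\ge7$ and $f\in\mathcal{P}^{s+}_{3,5}$ satisfies $f(t,1,1)=f(0,1,1)=f(0,0,1)=0$, then $f=\lambda\mathfrak{e}^E_t$ for some $\lambda\ge0$. (3) $\mathfrak{e}^E_\infty=s_4\in\mathcal{E}(\mathcal{P}^{s+}_{3,5})$. (4) If $f\in\mathcal{P}^{s+}_{3,5}$ satisfies $f(0,1,1)=f(0,0,1)=f_a(0,0,1)=f_{ab}(0,0,1)=0$, then $f=\lambda s_4$ for some $\lambda\ge0$.
   Context: Let $a,b,c$ be variables. For nonnegative integers $m,n$ put $S_{m,n}=a^mb^n+b^mc^n+c^ma^n$, $S_n=S_{n,0}=a^n+b^n+c^n$, $T_{m,n}=S_{m,n}+S_{n,m}$, $U=abc$ (so $S_{1,1}=ab+bc+ca$). Let $\mathcal{H}^s_{3,5}$ be the real vector space of symmetric homogeneous polynomials of degree 5 in $\mathbb{R}[a,b,c]$; it has basis $s_0=S_5-US_{1,1}$, $s_1=T_{4,1}-2US_{1,1}$, $s_2=T_{3,2}-2US_{1,1}$, $s_3=US_2-US_{1,1}$, $s_4=US_{1,1}$. Let $\mathcal{P}^{s+}_{3,5}=\{f\in\mathcal{H}^s_{3,5}: f(a,b,c)\ge 0\text{ for all }a,b,c\ge0\}$. For a closed convex cone $\mathcal{P}$, an element $f\in\mathcal{P}\setminus\{0\}$ is extremal if whenever $f=g+h$ with $g,h\in\mathcal{P}$ we have $g,h\in\mathbb{R}_{\ge0}f$;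 $\mathcal{E}(\mathcal{P})$ is the set of extremal elements. Subscripts denote partial derivatives: $f_a=\partial f/\partial a$, $f_{ab}=\partial^2f/\partial a\partial b$. Family E: $\mathfrak{e}^E_t=s_1-s_2-\frac{4t^2+5t+3}{t+2}s_3+\frac{(t-1)^3}{t+2}s_4$, and $\mathfrak{e}^E_\infty=s_4$. *)

From HB Require Import structures.
From mathcomp Require Import all_boot all_order all_algebra.
From mathcomp Require Import reals.
From mathcomp Require Import mpoly.
Set Implicit Arguments. Unset Strict Implicit. Unset Printing Implicit Defensive.
Import Order.TTheory GRing.Theory Num.Theory.
Local Open Scope ring_scope.

Section Defs.
Variable R : realType.

Definition va : {mpoly R[3]} := 'X_(@Ordinal 3 0 isT).
Definition vb : {mpoly R[3]} := 'X_(@Ordinal 3 1 isT).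
Definition vc : {mpoly R[3]} := 'X_(@Ordinal 3 2 isT).

Definition ia : 'I_3 := @Ordinal 3 0 isT.
Definition ib : 'I_3 := @Ordinal 3 1 isT.

Definition Smn (m n : nat) : {mpoly R[3]} :=
  va ^+ m * vb ^+ n + vb ^+ m * vc ^+ n + vc ^+ m * va ^+ n.
Definition Sn (n : nat) : {mpoly R[3]} := Smn n 0.
Definition Tmn (m n : nat) : {mpoly R[3]} := Smn m n + Smn n m.
Definition U : {mpoly R[3]} := va * vb * vc.

Definition s0 : {mpoly R[3]} := Sn 5 - U * Smn 1 1.
Definition s1 : {mpoly R[3]} := Tmn 4 1 - 2%:R *: (U * Smn 1 1).
Definition s2 : {mpoly R[3]} := Tmn 3 2 - 2%:R *: (U * Smn 1 1).
Definition s3 : {mpoly R[3]} := U * Sn 2 - U * Smn 1 1.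
Definition s4 : {mpoly R[3]} := U * Smn 1 1.

Definition eE (t : R) : {mpoly R[3]} :=
  s1 - s2 - ((4%:R * t ^+ 2 + 5%:R * t + 3%:R) / (t + 2%:R)) *: s3
     + ((t - 1) ^+ 3 / (t + 2%:R)) *: s4.
Definition eE_inf : {mpoly R[3]} := s4.

Definition Hs35 (f : {mpoly R[3]}) : Prop :=
  f \is symmetric /\ f \is 5.-homog.

Definition pt3 (x y z : R) : 'I_3 -> R := fun i => nth 0 [:: x; y; z] i.

Definition Ps35plus (f : {mpoly R[3]}) : Prop :=
  Hs35 f /\ forall x : 'I_3 -> R, (forall i, 0 <= x i) -> 0 <= f.@[x].

Definition extremal (P : {mpoly R[3]} -> Prop) (f : {mpoly R[3]}) : Prop :=
  [/\ P f, f <> 0 &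
    forall g h, P g -> P h -> f = g + h ->
      (exists l : R, 0 <= l /\ g = l *: f) /\ (exists l : R, 0 <= l /\ h = l *: f)].

End Defs.

From HB Require Import structures.
From mathcomp Require Import all_boot all_order all_algebra.
From mathcomp Require Import reals.
From mathcomp Require Import mpoly.
From mathcomp Require Import fingroup perm.
From mathcomp Require Import ring lra zify.
Set Implicit Arguments. Unset Strict Implicit. Unset Printing Implicit Defensive.
Import Order.TTheory GRing.Theory Num.Theory.
Local Open Scope ring_scope.

(* With p, q, r the
      elementary symmetric functions of (a,b,c), (t+2) e^E_t = phi t p q r is
      affine in r.  For fixed p, q the value of r is squeezed between its
      values at the triples (x, y, y) built from the two critical points y of
      (X-a)(X-b)(X-c), and there phi factors as
      x y (x - t y)^2 (2(t+2) x + (t-7) y) >= 0.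
   2. Two elementary facts on germs of real polynomials at 0 (section Germs).
   3. Coordinates (sections QuinticBasis, SymmetricQuintics).  Cone members vanishing at (t,1,1),
      (0,1,1), (0,0,1) have a double zero at t on the ray (y,1,1), which pins
      their coordinates to those of e^E_t.  A summand of s_4 vanishes on the
      face a = 0 and has k3 >= 0, so two summands adding up to s_4 are both
      multiples of s_4.  Extremality of e^E_t follows from the uniqueness
      statement, since summands of a cone member inherit its zeros. *)

Section PqrInequality.
Variable R : rcfType.
Implicit Types t p q r a b c x y s k : R.

(* The slope of phi in r, and phi itself: (t + 2) e^E_t = phi t p q r for
   p = a + b + c, q = ab + bc + ca, r = abc (lemma eE_Ps35plus below). *)
Definition phi_slope t p q :=
  (t + 2%:R) ^+ 2 * (t + 5%:R) * q - (2%:R * t + 1) ^+ 2 * p ^+ 2.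
Definition phi t p q r :=
  (t + 2%:R) * p * q * (p ^+ 2 - 4%:R * q) + r * phi_slope t p q.
Definition phi3 t a b c := phi t (a + b + c) (a * b + b * c + c * a) (a * b * c).

Lemma phi_affine t p q r r' : phi t p q r = phi t p q r' + (r - r') * phi_slope t p q.
Proof. by rewrite /phi; ring. Qed.

Lemma phi3_two_equal t x y :
  phi3 t x y y = x * y * (x - t * y) ^+ 2 * (2%:R * (t + 2%:R) * x + (t - 7%:R) * y).
Proof. by rewrite /phi3 /phi /phi_slope; ring. Qed.

Lemma phi3_two_equal_ge0 t x y : 7%:R <= t -> 0 <= x -> 0 <= y -> 0 <= phi3 t x y y.
Proof.
move=> ht hx hy; rewrite phi3_two_equal.
have lin_ge0 : 0 <= 2%:R * (t + 2%:R) * x + (t - 7%:R) * y by nra.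
by rewrite mulr_ge0 // mulr_ge0 ?sqr_ge0 // mulr_ge0.
Qed.

Definition cubic_crit a b c y :=
  3%:R * y ^+ 2 - 2%:R * (a + b + c) * y + (a * b + b * c + c * a) = 0.

Lemma crit_triple a b c y (x := a + b + c - 2%:R * y) : cubic_crit a b c y ->
  [/\ a + b + c = x + y + y, a * b + b * c + c * a = x * y + y * y + y * x
    & a * b * c = x * y * y + (a - y) * (b - y) * (c - y)].
Proof.
rewrite /cubic_crit => crit.
have crit_mul k : k * (3%:R * y ^+ 2 - 2%:R * (a + b + c) * y + (a * b + b * c + c * a)) = 0.
  by rewrite crit mulr0.
split; first by rewrite /x; ring.
  by apply/eqP; rewrite -subr_eq0 -(crit_mul 1); apply/eqP; rewrite /x; ring.
by apply/eqP; rewrite -subr_eq0 -(crit_mul y); apply/eqP; rewrite /x; ring.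
Qed.

Lemma phi3_at_crit t a b c y (x := a + b + c - 2%:R * y) : cubic_crit a b c y ->
  phi3 t a b c = phi3 t x y y
    + (a - y) * (b - y) * (c - y) * phi_slope t (a + b + c) (a * b + b * c + c * a).
Proof.
move=> /crit_triple [p_eq q_eq r_eq].
rewrite /phi3 (phi_affine _ _ _ _ (x * y * y)) -p_eq -q_eq; congr (_ + _).
by rewrite r_eq /x; ring.
Qed.

Lemma sqrt_le_sq k s : 0 <= k -> s <= k ^+ 2 -> Num.sqrt s <= k.
Proof. by move=> hk hs; rewrite -[k]ger0_norm // -sqrtr_sqr ler_sqrt ?sqr_ge0. Qed.

Lemma sq_le_sqrt k s : k ^+ 2 <= s -> k <= Num.sqrt s.
Proof.
move=> hs; apply: le_trans (ler_norm k) _.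
by rewrite -sqrtr_sqr ler_sqrt // (le_trans (sqr_ge0 k)).
Qed.

Lemma cubic_crit_sorted a b c : a <= b -> b <= c ->
  exists y1 y2, [/\ a <= y1 <= b, b <= y2 <= c, cubic_crit a b c y1 & cubic_crit a b c y2].
Proof.
move=> hab hbc.
pose D := (a + b + c) ^+ 2 - 3%:R * (a * b + b * c + c * a).
have D_ge0 : 0 <= D by rewrite /D; nra.
pose s := Num.sqrt D.
have sD : s ^+ 2 = D by rewrite sqr_sqrtr.
have above_a : s <= b + c - 2%:R * a by apply: sqrt_le_sq; rewrite /D; nra.
have below_b : a + c - 2%:R * b <= s by apply: sq_le_sqrt; rewrite /D; nra.
have above_b : 2%:R * b - a - c <= s by apply: sq_le_sqrt; rewrite /D; nra.
have below_c : s <= 2%:R * c - a - b by apply: sqrt_le_sq; rewrite /D; nra.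
have crit e : e ^+ 2 = 1 -> cubic_crit a b c ((a + b + c + e * s) / 3%:R).
  move=> e2; rewrite /cubic_crit.
  transitivity ((e ^+ 2 * s ^+ 2 - (a + b + c) ^+ 2) / 3%:R + (a * b + b * c + c * a)).
    by field.
  by rewrite e2 mul1r sD /D; field.
exists ((a + b + c + (-1) * s) / 3%:R), ((a + b + c + 1 * s) / 3%:R).
by split; [apply/andP; split; lra | apply/andP; split; lra | apply: crit; ring..].
Qed.

(* The uvw step: compare r with its value at the critical triple on the side
   where the slope makes phi smaller.  If that triple leaves the orthant
   (x < 0), then p^2 >= 4q and both terms of phi are nonnegative directly. *)
Lemma phi3_sorted_ge0 t a b c : 7%:R <= t -> 0 <= a -> a <= b -> b <= c ->
  0 <= phi3 t a b c.
Proof.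
move=> ht ha hab hbc.
have [y1 [y2 [/andP[ay1 y1b] /andP[by2 y2c] crit1 crit2]]] := cubic_crit_sorted hab hbc.
set C := phi_slope t (a + b + c) (a * b + b * c + c * a).
have [C_lt0 | C_ge0] := ltrP C 0.
  rewrite (phi3_at_crit t crit1) -/C addr_ge0 //; first by apply: phi3_two_equal_ge0; lra.
  have : (a - y1) * ((b - y1) * (c - y1)) <= 0 by rewrite mulr_le0_ge0 ?mulr_ge0 //; lra.
  by rewrite mulrA => neg; rewrite mulr_le0 // ltW.
have [x2_ge0 | x2_lt0] := lerP 0 (a + b + c - 2%:R * y2).
  rewrite (phi3_at_crit t crit2) -/C addr_ge0 //; first by apply: phi3_two_equal_ge0; lra.
  by rewrite mulr_ge0 // mulr_ge0 //; [apply: mulr_le0 | ]; lra.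
have [_ q_eq _] := crit_triple crit2.
have disc : 4%:R * (a * b + b * c + c * a) <= (a + b + c) ^+ 2.
  have : 0 <= (a + b + c - 2%:R * y2) * (a + b + c - 6%:R * y2) by rewrite nmulr_rge0; lra.
  rewrite q_eq; lra.
have q_ge0 : 0 <= a * b + b * c + c * a by rewrite !addr_ge0 // mulr_ge0 //; lra.
have r_ge0 : 0 <= a * b * c by rewrite !mulr_ge0 //; lra.
rewrite /phi3 /phi -/C addr_ge0 ?(mulr_ge0 r_ge0 C_ge0) //.
by rewrite !mulr_ge0 ?subr_ge0 //; lra.
Qed.

Lemma phi3_swap12 t a b c : phi3 t a b c = phi3 t b a c.
Proof. by rewrite /phi3; congr phi; ring. Qed.

Lemma phi3_swap23 t a b c : phi3 t a b c = phi3 t a c b.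
Proof. by rewrite /phi3; congr phi; ring. Qed.

Lemma phi3_ge0 t a b c : 7%:R <= t -> 0 <= a -> 0 <= b -> 0 <= c -> 0 <= phi3 t a b c.
Proof.
move=> ht ha hb hc.
have sorted x y z : 0 <= x -> x <= y -> y <= z -> 0 <= phi3 t x y z.
  by move=> *; apply: phi3_sorted_ge0.
have [hab|hba] := leP a b; have [hbc|hcb] := leP b c; have [hac|hca] := leP a c;
  by [ apply: sorted; lra
     | rewrite phi3_swap23; apply: sorted; lra
     | rewrite phi3_swap12; apply: sorted; lra
     | rewrite phi3_swap12 phi3_swap23; apply: sorted; lra
     | rewrite phi3_swap23 phi3_swap12; apply: sorted; lra
     | rewrite phi3_swap12 phi3_swap23 phi3_swap12; apply: sorted; lra
     | lra ].
Qed.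
End PqrInequality.

Section Germs.
Variable R : realFieldType.
Implicit Types a b c d x h : R.

(* If a + b x + c x^2 >= 0 for all small x > 0 then a >= 0: for a < 0, at
   x = -a / (-a + |b| + |c|) the terms b x + c x^2 are smaller than -a. *)
Lemma quadratic_germ_ge0 a b c :
  (forall x, 0 < x -> x <= 1 -> 0 <= a + b * x + c * x ^+ 2) -> 0 <= a.
Proof.
move=> germ; rewrite leNgt; apply/negP => a_lt0.
pose M := `|b| + `|c|.
have M_ge0 : 0 <= M by rewrite addr_ge0.
pose x := - a / (- a + M).
have den_gt0 : 0 < - a + M by lra.
have x_den : x * (- a + M) = - a by rewrite /x mulfVK // gt_eqF.
have x_gt0 : 0 < x by rewrite divr_gt0 //; lra.
have x_le1 : x <= 1 by rewrite ler_pdivrMr // mul1r; lra.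
have bx : b * x <= `|b| * x by rewrite ler_wpM2r ?ler_norm // ltW.
have cx : c * x ^+ 2 <= `|c| * x.
  apply: le_trans (_ : `|c| * x ^+ 2 <= _); first by rewrite ler_wpM2r ?ler_norm ?exprn_ge0 // ltW.
  by rewrite ler_wpM2l ?normr_ge0 // expr2 ger_pMl //.
have Mx : M * x < - a by nra.
by have := germ x x_gt0 x_le1; rewrite /M in Mx; lra.
Qed.

Lemma double_root_germ d e f :
  (forall h, -1 <= h -> h <= 1 -> 0 <= h * (d + e * h + f * h ^+ 2)) -> d = 0.
Proof.
move=> germ; apply/eqP; rewrite eq_le; apply/andP; split.
  rewrite -oppr_ge0; apply: (@quadratic_germ_ge0 _ e (- f)) => x x_gt0 x_le1.
  have := germ (- x); rewrite mulNr -mulrN pmulr_rge0 // sqrrN; lra.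
apply: (@quadratic_germ_ge0 _ e f) => x x_gt0 x_le1.
by have := germ x; rewrite pmulr_rge0 //; apply; lra.
Qed.
End Germs.

Definition ic : 'I_3 := @Ordinal 3 2 isT.

Lemma ord3P (P : 'I_3 -> Prop) : P ia -> P ib -> P ic -> forall i, P i.
Proof.
by move=> Pa Pb Pc [[|[|[|//]]] lt_i3]; [move: Pa | move: Pb | move: Pc];
  congr P; apply: val_inj.
Qed.

Definition mk3 (a b c : nat) : 'X_{1..3} :=
  (U_(ia) *+ a + U_(ib) *+ b + U_(ic) *+ c)%MM.

Lemma mk3E a b c : [/\ mk3 a b c ia = a, mk3 a b c ib = b & mk3 a b c ic = c].
Proof. by rewrite /mk3 !mnmDE !mulmnE !mnm1E /=; split; lia. Qed.

Lemma mk3_comp (m : 'X_{1..3}) : m = mk3 (m ia) (m ib) (m ic).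
Proof. by apply/mnmP; apply: ord3P; case: (mk3E (m ia) (m ib) (m ic)). Qed.

Lemma mk3_eq a b c a' b' c' :
  (mk3 a b c == mk3 a' b' c') = [&& a == a', b == b' & c == c'].
Proof.
apply/eqP/and3P => [E | [/eqP-> /eqP-> /eqP->] //].
have [Ea Eb Ec] := mk3E a b c; have [Ea' Eb' Ec'] := mk3E a' b' c'.
rewrite E in Ea Eb Ec.
by split; apply/eqP; [rewrite -Ea Ea' | rewrite -Eb Eb' | rewrite -Ec Ec'].
Qed.

Lemma mdeg_mk3 a b c : mdeg (mk3 a b c) = (a + b + c)%N.
Proof. by rewrite mdegE !big_ord_recl big_ord0 /mk3 !mnmDE !mulmnE !mnm1E /=; lia. Qed.

Section QuinticBasis.
Variable R : comNzRingType.
Implicit Types f : {mpoly R[3]}.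

Definition mono (a b c : nat) : {mpoly R[3]} := 'X_ia ^+ a * 'X_ib ^+ b * 'X_ic ^+ c.

Lemma monoE a b c : mono a b c = 'X_[mk3 a b c].
Proof. by rewrite /mono /mk3 !mpolyXD !mpolyXn. Qed.

Lemma mono_coeff a b c a' b' c' :
  (mono a' b' c')@_(mk3 a b c) = [&& a' == a, b' == b & c' == c]%:R.
Proof. by rewrite monoE mcoeffX mk3_eq. Qed.

Lemma mono_homog a b c : mono a b c \is (a + b + c).-homog.
Proof. by rewrite monoE dhomogX; apply/eqP; exact: mdeg_mk3. Qed.

Lemma mono_eval (x : 'I_3 -> R) a b c :
  (mono a b c).@[x] = x ia ^+ a * x ib ^+ b * x ic ^+ c.
Proof. by rewrite /mono !mevalM !rmorphXn /= !mevalXU. Qed.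

Lemma mderiv_mono_a a b c : mderiv ia (mono a b c) = a%:R *: mono a.-1 b c.
Proof.
have [Ea Eb Ec] := mk3E a b c; have [Ea' Eb' Ec'] := mk3E a.-1 b c.
rewrite !monoE mderivX Ea; congr (_ *: 'X_[_]); apply/mnmP; apply: ord3P;
  by rewrite mnmBE !mnm1E ?Ea ?Eb ?Ec ?Ea' ?Eb' ?Ec' /= ?subn0 ?subn1.
Qed.

Lemma mderiv_mono_b a b c : mderiv ib (mono a b c) = b%:R *: mono a b.-1 c.
Proof.
have [Ea Eb Ec] := mk3E a b c; have [Ea' Eb' Ec'] := mk3E a b.-1 c.
rewrite !monoE mderivX Eb; congr (_ *: 'X_[_]); apply/mnmP; apply: ord3P;
  by rewrite mnmBE !mnm1E ?Ea ?Eb ?Ec ?Ea' ?Eb' ?Ec' /= ?subn0 ?subn1.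
Qed.

Definition m5 := mono 5 0 0 + mono 0 5 0 + mono 0 0 5.
Definition m41 := mono 4 1 0 + mono 4 0 1 + mono 1 4 0 + mono 0 4 1 + mono 1 0 4 + mono 0 1 4.
Definition m32 := mono 3 2 0 + mono 3 0 2 + mono 2 3 0 + mono 0 3 2 + mono 2 0 3 + mono 0 2 3.
Definition m311 := mono 3 1 1 + mono 1 3 1 + mono 1 1 3.
Definition m221 := mono 2 2 1 + mono 2 1 2 + mono 1 2 2.

Definition sym5 (k0 k1 k2 k3 k4 : R) : {mpoly R[3]} :=
  k0 *: m5 + k1 *: m41 + k2 *: m32 + k3 *: m311 + k4 *: m221.

Definition sym5v (k0 k1 k2 k3 k4 a b c : R) : R :=
  k0 * (a ^+ 5 + b ^+ 5 + c ^+ 5)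
  + k1 * (a ^+ 4 * b + a ^+ 4 * c + a * b ^+ 4 + b ^+ 4 * c + a * c ^+ 4 + b * c ^+ 4)
  + k2 * (a ^+ 3 * b ^+ 2 + a ^+ 3 * c ^+ 2 + a ^+ 2 * b ^+ 3 + b ^+ 3 * c ^+ 2
          + a ^+ 2 * c ^+ 3 + b ^+ 2 * c ^+ 3)
  + k3 * (a ^+ 3 * b * c + a * b ^+ 3 * c + a * b * c ^+ 3)
  + k4 * (a ^+ 2 * b ^+ 2 * c + a ^+ 2 * b * c ^+ 2 + a * b ^+ 2 * c ^+ 2).

Lemma sym5_eval k0 k1 k2 k3 k4 (x : 'I_3 -> R) :
  (sym5 k0 k1 k2 k3 k4).@[x] = sym5v k0 k1 k2 k3 k4 (x ia) (x ib) (x ic).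
Proof. by rewrite /sym5 /m5 /m41 /m32 /m311 /m221 !(mevalD, mevalZ) !mono_eval /sym5v; ring. Qed.

Lemma sym5_homog k0 k1 k2 k3 k4 : sym5 k0 k1 k2 k3 k4 \is 5.-homog.
Proof. by rewrite /sym5 /m5 /m41 /m32 /m311 /m221 !(rpredD, rpredZ) // mono_homog. Qed.

Lemma sym5_coeff k0 k1 k2 k3 k4 (f := sym5 k0 k1 k2 k3 k4) :
  [/\ f@_(mk3 5 0 0) = k0, f@_(mk3 4 1 0) = k1, f@_(mk3 3 2 0) = k2,
      f@_(mk3 3 1 1) = k3 & f@_(mk3 2 2 1) = k4].
Proof.
by rewrite /f /sym5 /m5 /m41 /m32 /m311 /m221; split;
  rewrite !(mcoeffD, mcoeffZ) !mono_coeff /=; ring.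
Qed.

Lemma sym5Z l k0 k1 k2 k3 k4 :
  l *: sym5 k0 k1 k2 k3 k4 = sym5 (l * k0) (l * k1) (l * k2) (l * k3) (l * k4).
Proof. by rewrite /sym5 !scalerDr !scalerA. Qed.

Lemma sym5_deriv_a k0 k1 k2 k3 k4 (x : 'I_3 -> R) :
  x ia = 0 -> x ib = 0 -> x ic = 1 -> (mderiv ia (sym5 k0 k1 k2 k3 k4)).@[x] = k1.
Proof.
move=> xa xb xc; rewrite /sym5 /m5 /m41 /m32 /m311 /m221 !(mderivD, mderivZ) !mderiv_mono_a.
by rewrite !(mevalD, mevalZ) !mono_eval xa xb xc /=; ring.
Qed.

Lemma sym5_deriv_ba k0 k1 k2 k3 k4 (x : 'I_3 -> R) : x ia = 0 -> x ib = 0 -> x ic = 1 ->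
  (mderiv ib (mderiv ia (sym5 k0 k1 k2 k3 k4))).@[x] = k3.
Proof.
move=> xa xb xc; rewrite /sym5 /m5 /m41 /m32 /m311 /m221 !(mderivD, mderivZ) !mderiv_mono_a.
rewrite !(mderivD, mderivZ) !mderiv_mono_b.
by rewrite !(mevalD, mevalZ) !mono_eval xa xb xc /=; ring.
Qed.

Lemma sym_coeff_swap_ab f a b c : f \is symmetric -> f@_(mk3 a b c) = f@_(mk3 b a c).
Proof.
move=> f_sym; have [Ea Eb Ec] := mk3E a b c; have [Ea' Eb' Ec'] := mk3E b a c.
rewrite -(msym_coeff _ (tperm ia ib) f_sym); congr (_@__).
by apply/mnmP; apply: ord3P; rewrite mnmE permE /= ?Ea ?Eb ?Ec ?Ea' ?Eb' ?Ec'.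
Qed.

Lemma sym_coeff_swap_bc f a b c : f \is symmetric -> f@_(mk3 a b c) = f@_(mk3 a c b).
Proof.
move=> f_sym; have [Ea Eb Ec] := mk3E a b c; have [Ea' Eb' Ec'] := mk3E a c b.
rewrite -(msym_coeff _ (tperm ib ic) f_sym); congr (_@__).
by apply/mnmP; apply: ord3P; rewrite mnmE permE /= ?Ea ?Eb ?Ec ?Ea' ?Eb' ?Ec'.
Qed.

Lemma sym_coeff_sorted f : f \is symmetric ->
  (forall a b c, (b <= a)%N -> (c <= b)%N -> f@_(mk3 a b c) = 0) ->
  forall a b c, f@_(mk3 a b c) = 0.
Proof.
move=> f_sym sorted0 a b c.
have swap_ab := sym_coeff_swap_ab _ _ _ f_sym; have swap_bc := sym_coeff_swap_bc _ _ _ f_sym.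
have [ba|ab] := leqP b a; have [cb|bc] := leqP c b; have [ca|ac] := leqP c a;
  by [ apply: sorted0; lia
     | rewrite swap_bc; apply: sorted0; lia
     | rewrite swap_ab; apply: sorted0; lia
     | rewrite swap_ab swap_bc; apply: sorted0; lia
     | rewrite swap_bc swap_ab; apply: sorted0; lia
     | rewrite swap_ab swap_bc swap_ab; apply: sorted0; lia
     | lia ].
Qed.

Lemma quintic_partition a b c : (b <= a)%N -> (c <= b)%N -> (a + b + c = 5)%N ->
  (a, b, c) \in [:: (5, 0, 0); (4, 1, 0); (3, 2, 0); (3, 1, 1); (2, 2, 1)]%N.
Proof.
move=> ba cb sum5; have c_eq : c = (5 - (a + b))%N by lia.
have ab5 : (a + b <= 5)%N by lia.
by subst c; move: ba cb ab5 {sum5}; case: a => [|[|[|[|[|[|a]]]]]]; case: b => [|[|[|[|[|[|b]]]]]].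
Qed.

Lemma sym_quintic_eq0 f : f \is symmetric -> f \is 5.-homog ->
  f@_(mk3 5 0 0) = 0 -> f@_(mk3 4 1 0) = 0 -> f@_(mk3 3 2 0) = 0 ->
  f@_(mk3 3 1 1) = 0 -> f@_(mk3 2 2 1) = 0 -> f = 0.
Proof.
move=> f_sym f_hom c5 c41 c32 c311 c221; apply/mpolyP => m.
rewrite mcoeff0 (mk3_comp m); apply: sym_coeff_sorted => // a b c ba cb.
have [sum5 | sum_ne5] := eqVneq (a + b + c)%N 5%N.
  by have := quintic_partition ba cb sum5; rewrite !inE => /orP[|/orP[|/orP[|/orP[]]]] /eqP[-> -> ->].
by apply: (dhomog_nemf_coeff f_hom); rewrite /= mdeg_mk3.
Qed.
End QuinticBasis.

Section SymmetricQuintics.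
Variable R : numFieldType.
Implicit Types f : {mpoly R[3]}.

Lemma msymXU (s : 'S_3) (i : 'I_3) : msym s ('X_i : {mpoly R[3]}) = 'X_(s i).
Proof.
rewrite msymX; congr 'X_[_]; apply/mnmP => j; rewrite mnmE !mnm1E.
by rewrite -(inj_eq (@perm_inj _ s)) permKV.
Qed.

(* Power sums and the product of the variables are symmetric; the m_λ are
   polynomials in them. *)
Definition psum k : {mpoly R[3]} := \sum_(i < 3) 'X_i ^+ k.
Definition eprod : {mpoly R[3]} := \prod_(i < 3) 'X_i.

Lemma psum_sym k : psum k \is symmetric.
Proof.
apply/issymP => s; rewrite /psum rmorph_sum /=.
under eq_bigr do rewrite rmorphXn /= msymXU.
by rewrite [RHS](reindex_inj (@perm_inj _ s)).
Qed.

Lemma eprod_sym : eprod \is symmetric.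
Proof.
apply/issymP => s; rewrite /eprod rmorph_prod /=.
under eq_bigr do rewrite msymXU.
by rewrite [RHS](reindex_inj (@perm_inj _ s)).
Qed.

Lemma ord3_enum : [/\ ord0 = ia, lift ord0 ord0 = ib & lift ord0 (lift ord0 ord0) = ic :> 'I_3].
Proof. by split; apply: val_inj. Qed.

Lemma psumE k : psum k = 'X_ia ^+ k + 'X_ib ^+ k + 'X_ic ^+ k.
Proof. by have [E0 E1 E2] := ord3_enum; rewrite /psum !big_ord_recl big_ord0 addr0 addrA E2 E1 E0. Qed.

Lemma eprodE : eprod = 'X_ia * 'X_ib * 'X_ic.
Proof. by have [E0 E1 E2] := ord3_enum; rewrite /eprod !big_ord_recl big_ord0 mulr1 mulrA E2 E1 E0. Qed.

Lemma sym5_sym (k0 k1 k2 k3 k4 : R) : sym5 k0 k1 k2 k3 k4 \is symmetric.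
Proof.
have m5E : m5 R = psum 5 by rewrite psumE /m5 /mono; ring.
have m41E : m41 R = psum 4 * psum 1 - psum 5 by rewrite !psumE /m41 /mono; ring.
have m32E : m32 R = psum 3 * psum 2 - psum 5 by rewrite !psumE /m32 /mono; ring.
have m311E : m311 R = eprod * psum 2 by rewrite !psumE eprodE /m311 /mono; ring.
have m221E : m221 R = 2%:R^-1 *: (eprod * (psum 1 ^+ 2 - psum 2)).
  apply: (@scalerI _ _ 2%:R); first by rewrite pnatr_eq0.
  by rewrite scalerA mulfV ?pnatr_eq0 // scale1r !psumE eprodE /m221 /mono -mul_mpolyC; ring.
rewrite /sym5 m5E m41E m32E m311E m221E.
by rewrite !rpredD ?rpredZ ?rpredB ?rpredM ?rpredX ?psum_sym ?eprod_sym // rpredB ?rpredX ?psum_sym.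
Qed.

Lemma sym_quintic_decomp f : f \is symmetric -> f \is 5.-homog ->
  f = sym5 f@_(mk3 5 0 0) f@_(mk3 4 1 0) f@_(mk3 3 2 0) f@_(mk3 3 1 1) f@_(mk3 2 2 1).
Proof.
move=> f_sym f_hom; apply/eqP; rewrite -subr_eq0; apply/eqP.
have [c5 c41 c32 c311 c221] := sym5_coeff f@_(mk3 5 0 0) f@_(mk3 4 1 0) f@_(mk3 3 2 0)
  f@_(mk3 3 1 1) f@_(mk3 2 2 1).
apply: sym_quintic_eq0; rewrite ?mcoeffB ?c5 ?c41 ?c32 ?c311 ?c221 ?subrr //.
  by rewrite rpredB // sym5_sym.
by rewrite rpredB // sym5_homog.
Qed.
End SymmetricQuintics.

Section Extremal.
Variable R : realType.
Implicit Types (t a b c l : R) (f g h : {mpoly R[3]}).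

Definition eEa t := (4%:R * t ^+ 2 + 5%:R * t + 3%:R) / (t + 2%:R).
Definition eEb t := (t - 1) ^+ 3 / (t + 2%:R).

Lemma Tmn41E : Tmn R 4 1 = m41 R.
Proof. by rewrite /Tmn /Smn /va /vb /vc /m41 /mono; ring. Qed.

Lemma Tmn32E : Tmn R 3 2 = m32 R.
Proof. by rewrite /Tmn /Smn /va /vb /vc /m32 /mono; ring. Qed.

Lemma US2E : U R * Sn R 2 = m311 R.
Proof. by rewrite /U /Sn /Smn /va /vb /vc /m311 /mono; ring. Qed.

Lemma US11E : U R * Smn R 1 1 = m221 R.
Proof. by rewrite /U /Smn /va /vb /vc /m221 /mono; ring. Qed.

Lemma s4E : s4 R = sym5 0 0 0 0 1.
Proof. by rewrite /s4 US11E /sym5 !scale0r !add0r scale1r. Qed.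

Lemma eE_sym5 t : eE t = sym5 0 1 (-1) (- eEa t) (eEa t + eEb t).
Proof.
rewrite /eE /s1 /s2 /s3 /s4 Tmn41E Tmn32E US2E US11E /sym5 /eEa /eEb.
by rewrite -!mul_mpolyC !(rmorphM, rmorphD, rmorphN, rmorphB) /=; ring.
Qed.

Lemma sym5_pt3 (k0 k1 k2 k3 k4 a b c : R) :
  (sym5 k0 k1 k2 k3 k4).@[pt3 a b c] = sym5v k0 k1 k2 k3 k4 a b c.
Proof. exact: sym5_eval. Qed.

Lemma Hs35_sym5 (k0 k1 k2 k3 k4 : R) : Hs35 (sym5 k0 k1 k2 k3 k4).
Proof. by split; [exact: sym5_sym | exact: sym5_homog]. Qed.

Lemma Hs35_decomp f : Hs35 f -> exists k0 k1 k2 k3 k4, f = sym5 k0 k1 k2 k3 k4.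
Proof. by move=> [f_sym f_hom]; do 5 eexists; exact: sym_quintic_decomp. Qed.

Lemma Ps35plus_sym5 (k0 k1 k2 k3 k4 : R) : Ps35plus (sym5 k0 k1 k2 k3 k4) <->
  (forall a b c, 0 <= a -> 0 <= b -> 0 <= c -> 0 <= sym5v k0 k1 k2 k3 k4 a b c).
Proof.
split=> [[_ nonneg] a b c ha hb hc | nonneg].
  by rewrite -sym5_pt3; apply: nonneg => -[[|[|[|//]]] ?].
by split=> [|x x_ge0]; rewrite ?sym5_eval ?nonneg //; exact: Hs35_sym5.
Qed.

Lemma pt3_ge0 a b c : 0 <= a -> 0 <= b -> 0 <= c -> forall i, 0 <= pt3 a b c i.
Proof. by move=> ha hb hc [[|[|[|//]]] ?]. Qed.

Lemma summand_zero f g h (z : 'I_3 -> R) : Ps35plus g -> Ps35plus h -> f = g + h ->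
  (forall i, 0 <= z i) -> f.@[z] = 0 -> g.@[z] = 0 /\ h.@[z] = 0.
Proof.
move=> [_ g_ge0] [_ h_ge0] -> z_ge0; rewrite mevalD => sum0.
by have := g_ge0 _ z_ge0; have := h_ge0 _ z_ge0; split; lra.
Qed.

(* On the ray (y, 1, 1) a symmetric quintic with k0 = 0, k2 = -k1 is y times
   the cubic line_form; line_slope is the derivative of line_form in y. *)
Definition line_form (k1 k3 k4 y : R) :=
  2%:R * k1 * (y - 1) ^+ 2 * (y + 1) + k3 * (y ^+ 2 + 2%:R) + k4 * (2%:R * y + 1).
Definition line_slope (k1 k3 k4 y : R) :=
  2%:R * k1 * (3%:R * y ^+ 2 - 2%:R * y - 1) + 2%:R * k3 * y + 2%:R * k4.

Lemma sym5v_ray (k1 k3 k4 y : R) : sym5v 0 k1 (- k1) k3 k4 y 1 1 = y * line_form k1 k3 k4 y.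
Proof. by rewrite /sym5v /line_form; ring. Qed.

Lemma line_tangent (k1 k3 k4 t : R) : 1 < t ->
  (forall y, 0 <= y -> 0 <= y * line_form k1 k3 k4 y) ->
  line_form k1 k3 k4 t = 0 -> line_slope k1 k3 k4 t = 0.
Proof.
move=> t_gt1 nonneg root_t.
apply: (@double_root_germ _ _ (2%:R * k1 * (3%:R * t - 1) + k3) (2%:R * k1)) => h h_ge h_le.
have shift : line_form k1 k3 k4 (t + h) = line_form k1 k3 k4 t +
  h * (line_slope k1 k3 k4 t + (2%:R * k1 * (3%:R * t - 1) + k3) * h + 2%:R * k1 * h ^+ 2).
  by rewrite /line_form /line_slope; ring.
have := nonneg (t + h) (ltac:(lra)); rewrite shift root_t add0r pmulr_rge0 //; lra.
Qed.

Lemma line_solve (k1 k3 k4 t : R) : 7%:R <= t ->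
  line_form k1 k3 k4 t = 0 -> line_slope k1 k3 k4 t = 0 ->
  k3 = - eEa t * k1 /\ k4 = (eEa t + eEb t) * k1.
Proof.
move=> ht root slope.
have t2_neq0 : t + 2%:R != 0 by rewrite gt_eqF //; lra.
have t1_neq0 : t - 1 != 0 by rewrite gt_eqF //; lra.
have k3E : k3 = - eEa t * k1.
  have : (t - 1) * ((t + 2%:R) * k3 + (4%:R * t ^+ 2 + 5%:R * t + 3%:R) * k1) = 0.
    rewrite -[RHS](_ : (2%:R * t + 1) / 2%:R * line_slope k1 k3 k4 t - line_form k1 k3 k4 t = 0).
      by rewrite /line_slope /line_form; field.
    by rewrite root slope mulr0 subr0.
  move/eqP; rewrite mulf_eq0 (negbTE t1_neq0) /= addr_eq0 => /eqP k3E.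
  by apply: (mulfI t2_neq0); rewrite k3E /eEa; field.
split=> //; have k4E : k4 = line_slope k1 k3 k4 t / 2%:R - k1 * (3%:R * t ^+ 2 - 2%:R * t - 1) - k3 * t.
  by rewrite /line_slope; field.
by rewrite k4E slope k3E /eEa /eEb; field.
Qed.

Lemma eE_coefficients (k0 k1 k2 k3 k4 t : R) : 7%:R <= t ->
  (forall a b c, 0 <= a -> 0 <= b -> 0 <= c -> 0 <= sym5v k0 k1 k2 k3 k4 a b c) ->
  sym5v k0 k1 k2 k3 k4 t 1 1 = 0 -> sym5v k0 k1 k2 k3 k4 0 1 1 = 0 ->
  sym5v k0 k1 k2 k3 k4 0 0 1 = 0 ->
  [/\ 0 <= k1, k0 = 0, k2 = - k1, k3 = - eEa t * k1 & k4 = (eEa t + eEb t) * k1].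
Proof.
move=> ht nonneg zero_t11 zero_011 zero_001.
have k0E : k0 = 0 by rewrite -zero_001 /sym5v; ring.
have k2E : k2 = - k1 by move: zero_011; rewrite /sym5v k0E; lra.
have k1_ge0 : 0 <= k1.
  have := nonneg 0 2%:R 1 (lexx 0) (ler0n _ _) ler01; rewrite /sym5v k0E k2E; lra.
rewrite k0E k2E in nonneg zero_t11.
have root_t : line_form k1 k3 k4 t = 0.
  by move: zero_t11; rewrite sym5v_ray => /eqP; rewrite mulf_eq0 gt_eqF /= => [/eqP|]; lra.
have slope_t : line_slope k1 k3 k4 t = 0.
  apply: line_tangent root_t; first lra.
  by move=> y y_ge0; rewrite -sym5v_ray nonneg ?ler01.
by have [k3E k4E] := line_solve ht root_t slope_t; split.
Qed.

(* Nonnegativity of e^E_t: (t + 2) e^E_t is phi3. *)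
Lemma eE_Ps35plus t : 7%:R <= t -> Ps35plus (eE t).
Proof.
move=> ht; rewrite eE_sym5; apply/Ps35plus_sym5 => a b c ha hb hc.
have t2_gt0 : 0 < t + 2%:R by lra.
rewrite -(pmulr_rge0 _ t2_gt0) (_ : _ * _ = phi3 t a b c); first exact: phi3_ge0.
by rewrite /sym5v /phi3 /phi /phi_slope /eEa /eEb; field; rewrite gt_eqF.
Qed.

Lemma eE_unique t f : 7%:R <= t -> Ps35plus f ->
  f.@[pt3 t 1 1] = 0 -> f.@[pt3 0 1 1] = 0 -> f.@[pt3 0 0 1] = 0 ->
  exists l, 0 <= l /\ f = l *: eE t.
Proof.
move=> ht f_P; have [k0 [k1 [k2 [k3 [k4 fE]]]]] := Hs35_decomp f_P.1.
rewrite fE !sym5_pt3 in f_P * => zt z011 z001.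
have [k1_ge0 -> -> -> ->] := eE_coefficients ht ((Ps35plus_sym5 _ _ _ _ _).1 f_P) zt z011 z001.
exists k1; split => //; rewrite eE_sym5 sym5Z; congr sym5; ring.
Qed.

(* Summands of e^E_t inherit its zeros, so are multiples of it by eE_unique. *)
Lemma eE_extremal t : 7%:R <= t -> extremal (@Ps35plus R) (eE t).
Proof.
move=> ht; split; first exact: eE_Ps35plus.
  move=> eE0; have [_ c41 _ _ _] := sym5_coeff 0 1 (-1) (- eEa t) (eEa t + eEb t).
  by move: c41; rewrite -eE_sym5 eE0 mcoeff0 => /eqP; rewrite eq_sym oner_eq0.
move=> g h g_P h_P eE_gh.
have zero_at a b c : 0 <= a -> 0 <= b -> 0 <= c -> (eE t).@[pt3 a b c] = 0 ->
    g.@[pt3 a b c] = 0 /\ h.@[pt3 a b c] = 0.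
  by move=> ha hb hc; apply: summand_zero eE_gh (pt3_ge0 ha hb hc).
have t_ge0 : 0 <= t by lra.
have [g1 h1] : g.@[pt3 t 1 1] = 0 /\ h.@[pt3 t 1 1] = 0.
  apply: zero_at => //; rewrite eE_sym5 sym5_pt3 /sym5v /eEa /eEb; field; rewrite gt_eqF //; lra.
have [g2 h2] : g.@[pt3 0 1 1] = 0 /\ h.@[pt3 0 1 1] = 0.
  by apply: zero_at; rewrite // eE_sym5 sym5_pt3 /sym5v; ring.
have [g3 h3] : g.@[pt3 0 0 1] = 0 /\ h.@[pt3 0 0 1] = 0.
  by apply: zero_at; rewrite // eE_sym5 sym5_pt3 /sym5v; ring.
by split; apply: eE_unique.
Qed.

Lemma s4_multiple g (k4 : R) : Ps35plus g -> g = sym5 0 0 0 0 k4 ->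
  exists l, 0 <= l /\ g = l *: s4 R.
Proof.
move=> g_P gE; exists k4; split; last by rewrite gE s4E sym5Z !mulr0 mulr1.
rewrite gE in g_P; have := (Ps35plus_sym5 _ _ _ _ _).1 g_P 1 1 1 ler01 ler01 ler01.
by rewrite /sym5v; lra.
Qed.

Lemma s4_unique f : Ps35plus f ->
  f.@[pt3 0 1 1] = 0 -> f.@[pt3 0 0 1] = 0 ->
  (mderiv ia f).@[pt3 0 0 1] = 0 -> (mderiv ib (mderiv ia f)).@[pt3 0 0 1] = 0 ->
  exists l, 0 <= l /\ f = l *: s4 R.
Proof.
move=> f_P z011 z001 da dba; have [k0 [k1 [k2 [k3 [k4 fE]]]]] := Hs35_decomp f_P.1.
rewrite fE !sym5_pt3 in z011 z001; rewrite fE sym5_deriv_a // in da.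
rewrite fE sym5_deriv_ba // in dba; subst k1 k3.
have k0E : k0 = 0 by rewrite -z001 /sym5v; ring.
have k2E : k2 = 0 by move: z011; rewrite /sym5v k0E; lra.
by apply: (s4_multiple (k4 := k4) f_P); rewrite fE k0E k2E.
Qed.

(* A summand g of s_4 in the cone vanishes on the face a = 0, so lies in the
   span of m311 and m221, with a nonnegative m311-coefficient by the behaviour
   of g near (0, 0, 1) along (x, x, 1). *)
Lemma s4_summand g h : Ps35plus g -> Ps35plus h -> s4 R = g + h ->
  exists k3 k4, 0 <= k3 /\ g = sym5 0 0 0 k3 k4.
Proof.
move=> g_P h_P s4_gh; have [k0 [k1 [k2 [k3 [k4 gE]]]]] := Hs35_decomp g_P.1.
have face b c : 0 <= b -> 0 <= c -> sym5v k0 k1 k2 k3 k4 0 b c = 0.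
  move=> hb hc; rewrite -sym5_pt3 -gE.
  apply: (proj1 (summand_zero g_P h_P s4_gh (pt3_ge0 (lexx 0) hb hc) _)).
  by rewrite s4E sym5_pt3 /sym5v; ring.
have k0E : k0 = 0 by rewrite -(face 0 1) ?ler01 // /sym5v; ring.
have := face 1 1 ler01 ler01; have := face 2%:R 1 (ler0n _ _) ler01.
rewrite /sym5v k0E => face21 face11.
have k1E : k1 = 0 by lra.
have k2E : k2 = 0 by lra.
exists k3, k4; split; last by rewrite gE k0E k1E k2E.
apply: (@quadratic_germ_ge0 _ _ (2%:R * k4) (2%:R * k3 + k4)) => x x_gt0 x_le1.
rewrite -(pmulr_rge0 _ (exprn_gt0 2 x_gt0)); rewrite gE in g_P.
have := (Ps35plus_sym5 _ _ _ _ _).1 g_P x x 1 (ltW x_gt0) (ltW x_gt0) ler01.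
by rewrite /sym5v k0E k1E k2E; congr (_ <= _); ring.
Qed.

(* The m311-coordinates of two summands of s_4 are nonnegative and add up to
   that of s_4, which is 0; so both summands are multiples of s_4. *)
Lemma s4_extremal : extremal (@Ps35plus R) (s4 R).
Proof.
have s4_P : Ps35plus (s4 R).
  rewrite s4E; apply/Ps35plus_sym5 => a b c ha hb hc.
  by rewrite /sym5v !mul0r !add0r mul1r !addr_ge0 // !mulr_ge0 // exprn_ge0.
split=> //.
  move=> s40; have [_ _ _ _ c221] := sym5_coeff 0 0 0 0 (1 : R).
  by move: c221; rewrite -s4E s40 mcoeff0 => /eqP; rewrite eq_sym oner_eq0.
move=> g h g_P h_P s4_gh.
have [k3 [k4 [k3_ge0 gE]]] := s4_summand g_P h_P s4_gh.
have [l3 [l4 [l3_ge0 hE]]] := s4_summand h_P g_P (etrans s4_gh (addrC g h)).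
have [_ _ _ c311 _] := sym5_coeff 0 0 0 0 (1 : R).
have [_ _ _ g311 _] := sym5_coeff 0 0 0 k3 k4; have [_ _ _ h311 _] := sym5_coeff 0 0 0 l3 l4.
have sum0 : k3 + l3 = 0 by rewrite -g311 -h311 -gE -hE -mcoeffD -s4_gh s4E c311.
have k3E : k3 = 0 by lra.
have l3E : l3 = 0 by lra.
by split; [apply: (s4_multiple (k4 := k4) g_P); rewrite gE k3E
          | apply: (s4_multiple (k4 := l4) h_P); rewrite hE l3E].
Qed.
End Extremal.

Theorem theorem4p5 (R : realType) :
  [/\ (forall t : R, 7%:R <= t -> extremal (@Ps35plus R) (eE t)),
      (forall (t : R) (f : {mpoly R[3]}), 7%:R <= t -> Ps35plus f ->
         f.@[pt3 t 1 1] = 0 -> f.@[pt3 0 1 1] = 0 -> f.@[pt3 0 0 1] = 0 ->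
         exists l : R, 0 <= l /\ f = l *: eE t),
      extremal (@Ps35plus R) (eE_inf R) &
      (forall f : {mpoly R[3]}, Ps35plus f ->
         f.@[pt3 0 1 1] = 0 -> f.@[pt3 0 0 1] = 0 ->
         (mderiv ia f).@[pt3 0 0 1] = 0 ->
         (mderiv ib (mderiv ia f)).@[pt3 0 0 1] = 0 ->
         exists l : R, 0 <= l /\ f = l *: s4 R)].
Proof. by split; [exact: eE_extremal | exact: eE_unique | exact: s4_extremal | exact: s4_unique]. Qed.
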